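(* Let $k\ge1$. If $S\subseteq\mathbb R^n$ is the set of vertices of a $(k+1)$-level polytope, then $\mathcal I(S)$ is $\mathrm{TH}_k$-exact, i.e. $\mathrm{TH}_k(\mathcal I(S))=\operatorname{conv}(S)$.
   Context: For $S\subseteq\mathbb R^n$, $\mathcal I(S)$ is the ideal of all polynomials vanishing on $S$, and $\mathcal V_{\mathbb R}(I)$ is the real zero set of an ideal $I$. $\mathbb{R}[\mathbf x]_k$ denotes the polynomials of degree at most $k$. A polynomial $h$ is $k$-sos modulo $I$ if there are $g_1,\dots,g_r\in\mathbb{R}[\mathbf x]_k$ with $h-\sum_i g_i^2\in I$. The $k$-th theta body is $\mathrm{TH}_k(I)=\{p\in\mathbb R^n: l(p)\ge 0$ for every $l\in\mathbb{R}[\mathbf x]_1$ that is $k$-sos modulo $I\}$. $I$ is $\mathrm{TH}_k$-exact if $\mathrm{TH}_k(I)=\operatorname{cl}(\operatorname{conv}(\mathcal V_{\mathbb R}(I)))$. A polytope $P$ (facets taken relative to its affine hull) is $m$-level if for every facet $F$ of $P$ and the supporting hyperplane $H$ of $F$ there are $m-1$ hyperplanes $H_1,\dots,H_{m-1}$ parallel to $H$ such that all vertices of $P$ lie in $H\cup H_1\cup\dots\cup H_{m-1}$. *)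

From HB Require Import structures.
From mathcomp Require Import all_boot all_order all_algebra.
Set Implicit Arguments. Unset Strict Implicit. Unset Printing Implicit Defensive.
Import Order.TTheory GRing.Theory Num.Theory.
Local Open Scope ring_scope.

Section Defs.
Variables (R : rcfType) (n : nat).

Definition monom (e : {ffun 'I_n -> nat}) (x : 'rV[R]_n) : R :=
  \prod_(j < n) x 0 j ^+ e j.
Definition mdeg (e : {ffun 'I_n -> nat}) : nat := (\sum_(j < n) e j)%N.

Definition polyk (k : nat) (f : 'rV[R]_n -> R) : Prop :=
  exists ms : seq (R * {ffun 'I_n -> nat}),
    all (fun m => mdeg m.2 <= k)%N ms /\
    forall x, f x = \sum_(m <- ms) m.1 * monom m.2 x.

Definition lin (a : 'rV[R]_n) (c : R) (x : 'rV[R]_n) : R :=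
  \sum_(j < n) a 0 j * x 0 j + c.

Definition inI (S : seq 'rV[R]_n) (h : 'rV[R]_n -> R) : Prop :=
  forall s, s \in S -> h s = 0.

Definition ksos_mod (k : nat) (S : seq 'rV[R]_n) (h : 'rV[R]_n -> R) : Prop :=
  exists (r : nat) (g : 'I_r -> 'rV[R]_n -> R),
    (forall i, polyk k (g i)) /\
    inI S (fun x => h x - \sum_(i < r) g i x ^+ 2).

Definition TH (k : nat) (S : seq 'rV[R]_n) (p : 'rV[R]_n) : Prop :=
  forall a c, ksos_mod k S (lin a c) -> 0 <= lin a c p.

Definition conv (S : seq 'rV[R]_n) (p : 'rV[R]_n) : Prop :=
  exists w : 'I_(size S) -> R,
    (forall i, 0 <= w i) /\ \sum_(i < size S) w i = 1 /\
    p = \sum_(i < size S) w i *: S`_i.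

Definition vertex_set (S : seq 'rV[R]_n) : Prop :=
  forall s, s \in S -> ~ conv [seq t <- S | t != s] s.

Definition affdim (T : seq 'rV[R]_n) : nat :=
  \rank (\matrix_(i < size T, j < n) (T`_i - T`_0) 0 j).

(* the valid inequality lin a c >= 0 on conv(S) defines a facet
   (face of dimension dim conv(S) - 1, relative to the affine hull) *)
Definition defines_facet (S : seq 'rV[R]_n) (a : 'rV[R]_n) (c : R) : Prop :=
  (forall s, s \in S -> 0 <= lin a c s) /\
  let F := [seq s <- S | lin a c s == 0] in
  F != [::] /\ (affdim F).+1 = affdim S.

(* conv(S) is m-level: for each facet, the vertices lie on at most m
   hyperplanes (within the affine hull) parallel to the facet hyperplane *)
Definition mlevel (m : nat) (S : seq 'rV[R]_n) : Prop :=
  forall a c, defines_facet S a c ->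
    (size (undup [seq lin a c s | s <- S]) <= m)%N.

End Defs.

From HB Require Import structures.
From mathcomp Require Import all_boot all_order all_algebra.
Set Implicit Arguments. Unset Strict Implicit. Unset Printing Implicit Defensive.
Import Order.TTheory GRing.Theory Num.Theory.
Local Open Scope ring_scope.

(* If p is not in conv S, Farkas' lemma gives an affine function phi that is
   nonnegative on S and negative at p.  Tilting phi about its zero set until p
   and the zeros of phi on S affinely span S, phi either vanishes on S or
   defines a facet of conv S; in both cases phi takes at most k+1 values on S.
   Interpolating the square root on these values gives a polynomial g of
   degree at most k with phi = g^2 on S, so phi is k-sos modulo I(S) and p is
   not in TH_k.  The converse inclusion holds because sums of squares are
   nonnegative on S. *)

Section PolynomialFunctions.
Variables (R : rcfType) (n : nat).
Implicit Types (f g : 'rV[R]_n -> R).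

Lemma polyk_mono k k' f : (k <= k')%N -> polyk k f -> polyk k' f.
Proof.
move=> le_kk' [ms [ms_deg Ef]]; exists ms; split=> //.
by apply/allP=> m /(allP ms_deg) /leq_trans; apply.
Qed.

Lemma eq_polyk k f g : f =1 g -> polyk k f -> polyk k g.
Proof. by move=> Efg [ms [ms_deg Ef]]; exists ms; split=> // x; rewrite -Efg. Qed.

Lemma polyk_const k (c : R) : polyk k (fun _ : 'rV[R]_n => c).
Proof.
exists [:: (c, [ffun _ => 0%N])]; split.
  by rewrite /= /mdeg big1 // => j _; rewrite ffunE.
move=> x; rewrite big_seq1 /monom big1 ?mulr1 // => j _.
by rewrite ffunE expr0.
Qed.

Lemma polykD k f g : polyk k f -> polyk k g -> polyk k (fun x => f x + g x).
Proof.
move=> [ms1 [deg1 E1]] [ms2 [deg2 E2]]; exists (ms1 ++ ms2); split.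
  by rewrite all_cat deg1 deg2.
by move=> x; rewrite big_cat E1 E2.
Qed.

Lemma polykZ k (c : R) f : polyk k f -> polyk k (fun x => c * f x).
Proof.
move=> [ms [ms_deg Ef]]; exists [seq (c * m.1, m.2) | m <- ms]; split.
  by rewrite all_map.
by move=> x; rewrite big_map Ef mulr_sumr; apply: eq_bigr => m _; rewrite mulrA.
Qed.

Lemma polyk_sum k m (F : 'I_m -> 'rV[R]_n -> R) :
  (forall i, polyk k (F i)) -> polyk k (fun x => \sum_(i < m) F i x).
Proof.
elim: m F => [|m IHm] F polykF.
  by apply: (@eq_polyk _ (fun _ => 0)) (polyk_const _ _) => x; rewrite big_ord0.
apply: (@eq_polyk _ (fun x => F ord0 x + \sum_(i < m) F (lift ord0 i) x)).
  by move=> x; rewrite big_ord_recl.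
by apply: polykD; [exact: polykF | exact: IHm].
Qed.

Definition mexp_add (e1 e2 : {ffun 'I_n -> nat}) : {ffun 'I_n -> nat} :=
  [ffun j => (e1 j + e2 j)%N].

Lemma monom_add e1 e2 (x : 'rV[R]_n) : monom (mexp_add e1 e2) x = monom e1 x * monom e2 x.
Proof. by rewrite /monom -big_split; apply: eq_bigr => j _; rewrite ffunE exprD. Qed.

Lemma mdeg_add e1 e2 : mdeg (mexp_add e1 e2) = (mdeg e1 + mdeg e2)%N.
Proof. by rewrite /mdeg -big_split; apply: eq_bigr => j _; rewrite ffunE. Qed.

Lemma polykM k1 k2 f g : polyk k1 f -> polyk k2 g ->
  polyk (k1 + k2) (fun x => f x * g x).
Proof.
move=> [ms1 [deg1 E1]] [ms2 [deg2 E2]].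
exists [seq (u.1.1 * u.2.1, mexp_add u.1.2 u.2.2)
         | u <- [seq (m1, m2) | m1 <- ms1, m2 <- ms2]].
split.
  rewrite all_map; apply/allP=> _ /allpairsP [[m1 m2] [m1_in m2_in ->]] /=.
  by rewrite mdeg_add leq_add ?(allP deg1) ?(allP deg2).
move=> x; rewrite big_map big_allpairs E1 mulr_suml; apply: eq_bigr => m1 _.
rewrite E2 mulr_sumr; apply: eq_bigr => m2 _ /=.
by rewrite monom_add mulrACA.
Qed.

Lemma polykX k f i : polyk k f -> polyk (k * i) (fun x => f x ^+ i).
Proof.
move=> polyk_f; elim: i => [|i IHi].
  by rewrite muln0; apply: (@eq_polyk _ (fun _ => 1)) (polyk_const _ _) => x.
rewrite mulnS; apply: (@eq_polyk _ (fun x => f x * f x ^+ i)) (polykM _ _) => //.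
by move=> x; rewrite exprS.
Qed.

Definition mexp_unit (j : 'I_n) : {ffun 'I_n -> nat} := [ffun i => (i == j) : nat].

Lemma polyk_coord (j : 'I_n) : polyk 1 (fun x : 'rV[R]_n => x 0 j).
Proof.
have unit_exp i : (i != j) -> mexp_unit j i = 0%N by rewrite ffunE => /negbTE ->.
exists [:: (1, mexp_unit j)]; split.
  by rewrite /= /mdeg andbT (bigD1 j) //= ffunE eqxx big1 // => i /unit_exp.
move=> x; rewrite big_seq1 mul1r /monom (bigD1 j) //= ffunE eqxx expr1.
by rewrite big1 ?mulr1 // => i /unit_exp ->.
Qed.

Lemma polyk_lin (a : 'rV[R]_n) c : polyk 1 (lin a c).
Proof.
apply: polykD (polyk_const _ _); apply: polyk_sum => j.
exact/polykZ/polyk_coord.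
Qed.

Lemma polyk_horner k (q : {poly R}) f : (size q <= k.+1)%N -> polyk 1 f ->
  polyk k (fun x => q.[f x]).
Proof.
move=> size_q polyk_f.
apply: (@eq_polyk _ (fun x => \sum_(i < size q) q`_i * f x ^+ i)).
  by move=> x; rewrite horner_coef.
apply: polyk_sum => i; apply/polykZ/(@polyk_mono (1 * i)); last exact: polykX.
by rewrite mul1n -ltnS (leq_trans (ltn_ord i)).
Qed.

End PolynomialFunctions.

Lemma exists_interpolating_poly (F : fieldType) (V : seq F) (h : F -> F) : uniq V ->
  exists2 q : {poly F}, (size q <= size V)%N & {in V, forall v, q.[v] = h v}.
Proof.
elim: V => [|v V IHV] /=; first by exists 0; rewrite ?size_poly0.
move=> /andP[vNV uniqV]; have [q size_q q_interp] := IHV uniqV.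
pose P := \prod_(w <- V) ('X - w%:P).
have P_root w : w \in V -> P.[w] = 0.
  by move=> wV; apply/eqP; rewrite horner_prod prodf_seq_eq0; apply/hasP; exists w;
     rewrite //= hornerXsubC subrr.
have Pv_neq0 : P.[v] != 0.
  rewrite horner_prod prodf_seq_neq0; apply/allP => w wV /=.
  by rewrite hornerXsubC subr_eq0; apply: contraNneq vNV => ->.
exists (q + ((h v - q.[v]) / P.[v]) *: P).
  rewrite (leq_trans (size_polyD _ _)) // geq_max (leqW size_q) /=.
  by rewrite (leq_trans (size_scale_leq _ _)) // size_prod_XsubC.
move=> w; rewrite in_cons hornerD hornerZ => /predU1P[->|wV].
  by rewrite divfK // addrC subrK.
by rewrite (P_root w wV) mulr0 addr0 q_interp.
Qed.

Section SumsOfSquares.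
Variables (R : rcfType) (n : nat).
Implicit Types (S : seq 'rV[R]_n) (h : 'rV[R]_n -> R).

Lemma ksos_mod_few_values k S h : polyk 1 h -> {in S, forall s, 0 <= h s} ->
  (size (undup [seq h s | s <- S]) <= k.+1)%N -> ksos_mod k S h.
Proof.
move=> polyk_h h_ge0 few_values.
have [q size_q q_sqrt] :=
  exists_interpolating_poly (@Num.sqrt R) (undup_uniq [seq h s | s <- S]).
exists 1%N, (fun _ x => q.[h x]); split.
  by move=> _; apply: polyk_horner polyk_h; apply: leq_trans few_values.
move=> s sS; rewrite big_ord1 q_sqrt ?sqr_sqrtr ?subrr ?h_ge0 //.
by rewrite mem_undup map_f.
Qed.

Lemma ksos_mod_vanishing k S h : {in S, forall s, h s = 0} -> ksos_mod k S h.
Proof.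
move=> h0; exists 0%N, (fun _ _ => 0); split=> [_|s sS]; first exact: polyk_const.
by rewrite big_ord0 subr0 h0.
Qed.

Lemma TH_of_conv k S p : conv S p -> TH k S p.
Proof.
move=> [w [w_ge0 [w_sum1 ->]]] a c [r [g [_ sos_on_S]]].
have -> : lin a c (\sum_i w i *: S`_i) = \sum_i w i * lin a c S`_i.
  rewrite /lin; under [RHS]eq_bigr do rewrite mulrDr.
  rewrite big_split /= -mulr_suml w_sum1 mul1r; congr (_ + _).
  under eq_bigr do rewrite summxE mulr_sumr.
  rewrite exchange_big; apply: eq_bigr => i _; rewrite mulr_sumr.
  by apply: eq_bigr => j _; rewrite !mxE mulrCA.
apply/sumr_ge0 => i _; rewrite mulr_ge0 //.
move/eqP: (sos_on_S _ (mem_nth 0 (ltn_ord i))); rewrite subr_eq0 => /eqP ->.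
by apply: sumr_ge0 => j _; apply: sqr_ge0.
Qed.

End SumsOfSquares.

Section Farkas.
Variables (R : realFieldType) (N : nat).
Implicit Types (u v b : 'rV[R]_N) (y z : 'cV[R]_N).

Definition vdot u y : R := (u *m y) 0 0.

Lemma vdotDZr u y t z : vdot u (y + t *: z) = vdot u y + t * vdot u z.
Proof. by rewrite /vdot mulmxDr -scalemxAr !mxE. Qed.

Lemma vdotBZr u (s t : R) y z : vdot u (s *: y - t *: z) = s * vdot u y - t * vdot u z.
Proof. by rewrite /vdot mulmxBr -!scalemxAr !mxE. Qed.

Lemma vdotBZl (s t : R) u v y : vdot (s *: u - t *: v) y = s * vdot u y - t * vdot v y.
Proof. by rewrite /vdot mulmxBl -!scalemxAl !mxE. Qed.

Lemma vdotNr u y : vdot u (- y) = - vdot u y.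
Proof. by rewrite /vdot mulmxN mxE. Qed.

Lemma vdot_tr_gt0 u : u != 0 -> 0 < vdot u u^T.
Proof.
have sq_ge0 j : true -> 0 <= u 0 j * u^T j 0 by rewrite mxE -expr2 sqr_ge0.
move=> u_neq0; rewrite /vdot mxE lt_def sumr_ge0 ?andbT //.
apply: contra u_neq0 => /eqP/(psumr_eq0P sq_ge0) u2_eq0; apply/eqP/rowP => j.
by have /eqP := u2_eq0 j isT; rewrite !mxE mulf_eq0 orbb => /eqP.
Qed.

Lemma exists_vdot_lt0_coker m (M : 'M[R]_(m, N)) u : ~~ (u <= M)%MS ->
  exists2 y, M *m y = 0 & vdot u y < 0.
Proof.
rewrite submxE => uC_neq0; exists (- (cokermx M *m (u *m cokermx M)^T)).
  by rewrite mulmxN mulmxA mulmx_coker mul0mx oppr0.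
by rewrite vdotNr oppr_lt0 /vdot mulmxA vdot_tr_gt0.
Qed.

Definition consf m (t : R) (mu : 'I_m -> R) (i : 'I_m.+1) : R :=
  if unlift ord0 i is Some j then mu j else t.

Lemma consf0 m t (mu : 'I_m -> R) : consf t mu ord0 = t.
Proof. by rewrite /consf unlift_none. Qed.

Lemma consfS m t (mu : 'I_m -> R) i : consf t mu (lift ord0 i) = mu i.
Proof. by rewrite /consf liftK. Qed.

Lemma consf_ge0 m t (mu : 'I_m -> R) :
  0 <= t -> (forall i, 0 <= mu i) -> forall i, 0 <= consf t mu i.
Proof. by move=> t_ge0 mu_ge0 i; rewrite /consf; case: unlift. Qed.

Lemma sum_consf m t (mu : 'I_m -> R) (F : 'I_m.+1 -> 'rV[R]_N) :
  \sum_i consf t mu i *: F i = t *: F ord0 + \sum_i mu i *: F (lift ord0 i).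
Proof. by rewrite big_ord_recl consf0; under eq_bigr do rewrite consfS. Qed.

(* Fourier-Motzkin elimination of [a]: the combination of [v] and [a] that is
   orthogonal to [y]. *)
Definition fm_elim (a : 'rV[R]_N) y v := vdot v y *: a - vdot a y *: v.

Section FourierMotzkinStep.
Variables (m : nat) (F : 'I_m.+1 -> 'rV[R]_N) (b : 'rV[R]_N) (y : 'cV[R]_N).
Let a := F ord0.
Let G i := F (lift ord0 i).
Hypotheses (Gy_ge0 : forall i, 0 <= vdot (G i) y) (by_lt0 : vdot b y < 0)
           (ay_lt0 : vdot a y < 0).

Let G' i := fm_elim a y (G i).
Let b' := fm_elim a y b.

Lemma cone_of_projected_cone mu : (forall i, 0 <= mu i) ->
  b' = \sum_i mu i *: G' i ->
  exists2 nu, (forall i, 0 <= nu i) & b = \sum_i nu i *: F i.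
Proof.
move=> mu_ge0 Eb'; pose s := \sum_i mu i * vdot (G i) y.
pose t := (vdot b y - s) / vdot a y.
have ay_neq0 : vdot a y != 0 by rewrite lt_eqF.
exists (consf t mu); last rewrite sum_consf.
  apply: consf_ge0 => //; rewrite ler_ndivlMr // mul0r subr_le0.
  by rewrite (le_trans (ltW by_lt0)) // sumr_ge0 // => i _; rewrite mulr_ge0.
apply: (scalerI ay_neq0); rewrite scalerDr scalerA mulrC divfK //.
have sum_G' : \sum_i mu i *: G' i = s *: a - vdot a y *: \sum_i mu i *: G i.
  rewrite scaler_suml scaler_sumr -sumrB; apply: eq_bigr => i _.
  by rewrite scalerBr !scalerA [vdot a y * _]mulrC.
have -> : vdot a y *: b = vdot b y *: a - b' by rewrite opprB addrC subrK.
by rewrite Eb' sum_G' opprB scalerBl [vdot a y *: _ - _]addrC addrA.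
Qed.

Lemma dual_of_projected_dual z : (forall i, 0 <= vdot (G' i) z) -> vdot b' z < 0 ->
  exists2 y', (forall i, 0 <= vdot (F i) y') & vdot b y' < 0.
Proof.
move=> G'z_ge0 b'z_lt0; exists (vdot a z *: y - vdot a y *: z).
  move=> i; case: (unliftP ord0 i) => [j ->|->]; rewrite vdotBZr.
    by move: (G'z_ge0 j); rewrite /G' vdotBZl [vdot (G j) y * _]mulrC.
  by rewrite mulrC subrr.
by rewrite vdotBZr; move: b'z_lt0; rewrite /b' vdotBZl [vdot b y * _]mulrC.
Qed.

End FourierMotzkinStep.

Lemma farkas m (F : 'I_m -> 'rV[R]_N) b :
  (exists2 mu, (forall i, 0 <= mu i) & b = \sum_i mu i *: F i) \/
  (exists2 y, (forall i, 0 <= vdot (F i) y) & vdot b y < 0).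
Proof.
elim: m F b => [|m IHm] F b.
  have [->|b_neq0] := eqVneq b 0; first by left; exists (fun _ => 0); rewrite ?big_ord0.
  by right; exists (- b^T); [case | rewrite vdotNr oppr_lt0 vdot_tr_gt0].
have [[mu mu_ge0 Eb]|[y Gy_ge0 by_lt0]] := IHm (fun i => F (lift ord0 i)) b.
  left; exists (consf 0 mu); first exact: consf_ge0.
  by rewrite sum_consf scale0r add0r.
have [ay_ge0|ay_lt0] := leP 0 (vdot (F ord0) y).
  by right; exists y => // i; case: (unliftP ord0 i) => [j ->|->].
have [[mu mu_ge0 Eb']|[z G'z_ge0 b'z_lt0]] :=
  IHm (fun i => fm_elim (F ord0) y (F (lift ord0 i))) (fm_elim (F ord0) y b).
- by left; apply: cone_of_projected_cone Eb'.
- by right; apply: dual_of_projected_dual G'z_ge0 b'z_lt0.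
Qed.

End Farkas.

Section Homogenization.
Variables (R : rcfType) (n : nat).
Implicit Types (S T : seq 'rV[R]_n) (x p s : 'rV[R]_n) (phi : 'cV[R]_(1 + n)).

Definition homog x : 'rV[R]_(1 + n) := row_mx (const_mx 1) x.

Definition heval phi x : R := vdot (homog x) phi.
Definition hcoef phi : 'rV[R]_n := (dsubmx phi)^T.
Definition hconst phi : R := usubmx phi 0 0.

Lemma heval_lin phi x : heval phi x = lin (hcoef phi) (hconst phi) x.
Proof.
rewrite /heval /vdot /homog -[phi]vsubmxK mul_row_col mxE addrC.
rewrite /lin /hconst /hcoef col_mxKu col_mxKd; congr (_ + _).
  by rewrite mxE; apply: eq_bigr => j _; rewrite !mxE mulrC.
by rewrite mxE big_ord1 mxE mul1r.
Qed.

Lemma homog0 x : homog x 0 (lshift n 0) = 1.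
Proof. by rewrite row_mxEl mxE. Qed.

Lemma homog_neq0 x : homog x != 0.
Proof. by apply: contra_neq (@oner_neq0 R) => hx0; rewrite -(homog0 x) hx0 mxE. Qed.

Lemma homog_sub_homog x p : (homog x <= homog p)%MS -> x = p.
Proof.
move/sub_rVP=> [t Ex]; have := homog0 x; rewrite Ex mxE homog0 mulr1 => t1.
by move: Ex; rewrite t1 scale1r => /(congr1 rsubmx); rewrite !row_mxKr.
Qed.

Definition hmx T : 'M[R]_(size T, 1 + n) := \matrix_(i < size T) homog T`_i.

Lemma row_hmx T i : row i (hmx T) = homog T`_i.
Proof. exact: rowK. Qed.

Lemma homog_sub_hmx T x : x \in T -> (homog x <= hmx T)%MS.
Proof.
rewrite -index_mem => xT; apply: (eq_row_sub (Ordinal xT)).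
by rewrite row_hmx nth_index // -index_mem.
Qed.

Lemma hmx_subset S T : {subset S <= T} -> (hmx S <= hmx T)%MS.
Proof.
by move=> sST; apply/row_subP => i; rewrite row_hmx homog_sub_hmx ?sST ?mem_nth.
Qed.

Lemma hmx_mul_eq0 T phi : {in T, forall x, heval phi x = 0} -> hmx T *m phi = 0.
Proof.
move=> phi0; apply/row_matrixP => i; rewrite row_mul row_hmx row0.
apply/rowP => j; rewrite (ord1 j) [RHS]mxE.
exact: (phi0 _ (mem_nth 0 (ltn_ord i))).
Qed.

Lemma heval_eq0 phi m (M : 'M[R]_(m, 1 + n)) x :
  M *m phi = 0 -> (homog x <= M)%MS -> heval phi x = 0.
Proof.
by move=> Mphi0 /submxP[D Ex]; rewrite /heval /vdot Ex -mulmxA Mphi0 mulmx0 mxE.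
Qed.

Lemma capmx_homog_row0mx m x (D : 'M[R]_(m, n)) :
  (homog x :&: row_mx (0 : 'M_(m, 1)) D <= (0 : 'M_(1 + n)))%MS.
Proof.
apply/row_subP => i; have := row_sub i (homog x :&: row_mx 0 D)%MS.
move: (row i _) => r r_sub.
have /sub_rVP[t Er] : (r <= homog x)%MS by rewrite (submx_trans r_sub) ?capmxSl.
have /submxP[Y EY] : (r <= row_mx 0 D)%MS by rewrite (submx_trans r_sub) ?capmxSr.
have : r 0 (lshift n 0) = 0 by rewrite EY mul_mx_row mulmx0 row_mxEl mxE.
by rewrite Er mxE homog0 mulr1 => ->; rewrite scale0r sub0mx.
Qed.

(* Subtracting the first row from the others leaves the first row, with first
   coordinate 1, and the difference vectors, with first coordinate 0. *)
Lemma rank_hmx T : T != [::] -> \rank (hmx T) = (affdim T).+1.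
Proof.
move=> T_neq0; have T0 : (0 < size T)%N by case: T T_neq0.
pose u := homog T`_0.
pose B : 'M[R]_(size T, 1 + n) := row_mx 0 (\matrix_(i, j) (T`_i - T`_0) 0 j).
have rowB i : row i B = homog T`_i - u.
  rewrite /B /u /homog row_row_mx row0 opp_row_mx add_row_mx subrr.
  by congr row_mx; apply/rowP => j; rewrite !mxE.
have hmxE : (hmx T == u + B)%MS.
  apply/andP; split.
    apply/row_subP => i; rewrite row_hmx -[homog _](subrK u) -rowB addrC.
    exact: addmx_sub_adds (submx_refl _) (row_sub _ _).
  rewrite addsmx_sub homog_sub_hmx ?mem_nth //=.
  apply/row_subP => i; rewrite rowB addmx_sub ?homog_sub_hmx ?mem_nth //.
  by rewrite -scaleN1r scalemx_sub ?homog_sub_hmx ?mem_nth.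
rewrite (eqmx_rank hmxE); have [_] := mxrank_adds_leqif u B.
rewrite capmx_homog_row0mx => /eqP ->.
by rewrite rank_rV homog_neq0 rank_row_0mx.
Qed.

End Homogenization.

Lemma exists_argmin_seq (T : eqType) (d : Order.disp_t) (U : orderType d)
    (s : seq T) (f : T -> U) x0 :
  x0 \in s -> exists2 x, x \in s & forall y, y \in s -> (f x <= f y)%O.
Proof.
elim: s x0 => [|a s IHs] x0 //= _.
case: s IHs => [|b s] IHs.
  by exists a => [|y]; rewrite ?mem_seq1 // => /eqP ->.
have [x xs x_min] := IHs b (mem_head _ _).
have [fa_le|fx_lt] := leP (f a) (f x).
  exists a => [|y /predU1P[->//|/x_min]]; first exact: mem_head.
  exact: le_trans.
exists x => [|y /predU1P[->|/x_min //]]; first by rewrite in_cons xs orbT.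
exact: ltW.
Qed.

Section Separators.
Variables (R : rcfType) (n : nat).
Implicit Types (S : seq 'rV[R]_n) (x p s : 'rV[R]_n) (phi psi : 'cV[R]_(1 + n)).

Definition separates S p phi :=
  {in S, forall s, 0 <= heval phi s} /\ heval phi p < 0.

Definition zero_set S phi := [seq s <- S | heval phi s == 0].

Definition zspan S p phi := (homog p + hmx (zero_set S phi))%MS.

Lemma homog_sub_zspan S p phi x : x \in zero_set S phi -> (homog x <= zspan S p phi)%MS.
Proof. by move=> xZ; rewrite (submx_trans (homog_sub_hmx xZ)) ?addsmxSr. Qed.

Lemma zero_set_hmx_mul S phi : hmx (zero_set S phi) *m phi = 0.
Proof. by apply: hmx_mul_eq0 => x; rewrite mem_filter => /andP[/eqP]. Qed.

(* Tilting phi towards a direction y that vanishes on zspan S p phi but not on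
   some s keeps phi separating, until a new point of S becomes a zero. *)
Lemma separator_tilt S p phi s : separates S p phi -> s \in S ->
  ~~ (homog s <= zspan S p phi)%MS ->
  exists2 psi, separates S p psi & (\rank (zspan S p phi) < \rank (zspan S p psi))%N.
Proof.
move=> [phi_ge0 phip_lt0] sS s_out.
have [y zspan_y ys_lt0] := exists_vdot_lt0_coker s_out.
have y0 x : (homog x <= zspan S p phi)%MS -> heval y x = 0 by apply: heval_eq0.
pose f x := heval phi x / - heval y x.
have sC : s \in [seq x <- S | heval y x < 0] by rewrite mem_filter sS andbT.
have [s1 /[!mem_filter] /andP[ys1_lt0 s1S] s1_min] := exists_argmin_seq f sC.
pose t := f s1; pose psi := phi + t *: y.
have t_ge0 : 0 <= t by rewrite divr_ge0 ?phi_ge0 // oppr_ge0 ltW.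
have psiE x : heval psi x = heval phi x + t * heval y x by apply: vdotDZr.
have zero_subset : {subset zero_set S phi <= zero_set S psi}.
  move=> x xZ; move: (xZ); rewrite !mem_filter psiE => /andP[/eqP-> ->].
  by rewrite y0 ?homog_sub_zspan // mulr0 addr0 eqxx.
have s1Z : s1 \in zero_set S psi.
  rewrite mem_filter s1S andbT psiE /t /f invrN mulrN mulNr divfK ?subrr //.
  by rewrite lt_eqF.
exists psi.
  split; last by rewrite psiE y0 ?addsmxSl // mulr0 addr0.
  move=> x xS; rewrite psiE; have [yx_lt0|yx_ge0] := ltP (heval y x) 0.
    have : t <= f x by apply: s1_min; rewrite mem_filter yx_lt0.
    rewrite ler_pdivlMr ?oppr_gt0 // mulrN => le_t.
    by rewrite -[t * _]opprK subr_ge0.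
  by rewrite addr_ge0 ?phi_ge0 // mulr_ge0.
apply: rank_ltmx; rewrite ltmxE addsmxS ?hmx_subset //=.
apply: contraL ys1_lt0 => sub_zspan.
by rewrite y0 ?ltxx // (submx_trans (homog_sub_zspan p s1Z)).
Qed.

Lemma exists_spanning_separator S p phi : separates S p phi ->
  exists2 psi, separates S p psi & {in S, forall s, homog s <= zspan S p psi}%MS.
Proof.
have [d] : exists d, (1 + n - \rank (zspan S p phi) <= d)%N.
  by exists (1 + n - \rank (zspan S p phi))%N.
elim: d phi => [|d IHd] phi le_d sep_phi;
  have [spans|/allPn[s sS s_out]] := boolP (all (fun s => homog s <= zspan S p phi)%MS S);
  do ?by exists phi => // s /(allP spans).
all: have [psi sep_psi lt_rank] := separator_tilt sep_phi sS s_out.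
all: have le_rank := rank_leq_col (zspan S p psi).
  move: le_d; rewrite leqn0 subn_eq0 => /(leq_trans (leq_trans lt_rank le_rank)).
  by rewrite ltnn.
apply: (IHd psi _ sep_psi); rewrite -ltnS (leq_trans _ le_d) // ltn_sub2l //.
exact: leq_trans lt_rank le_rank.
Qed.

End Separators.

Section Facets.
Variables (R : rcfType) (n : nat).
Implicit Types (S : seq 'rV[R]_n) (p s : 'rV[R]_n) (phi : 'cV[R]_(1 + n)).

Lemma defines_facet_of_spanning S p phi s0 : separates S p phi ->
  {in S, forall s, homog s <= zspan S p phi}%MS -> s0 \in S -> heval phi s0 != 0 ->
  defines_facet S (hcoef phi) (hconst phi).
Proof.
move=> [phi_ge0 phip_lt0] spans s0S phis0; rewrite /defines_facet.
have -> : [seq s <- S | lin (hcoef phi) (hconst phi) s == 0] = zero_set S phi.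
  by apply: eq_filter => x; rewrite heval_lin.
split=> [s /phi_ge0|]; first by rewrite heval_lin.
have Z_neq0 : zero_set S phi != [::].
  apply/eqP => Z0; move: (spans s0 s0S); rewrite /zspan Z0 [hmx _]flatmx0 addsmx0.
  by move/homog_sub_homog => s0p; move: (phi_ge0 s0 s0S); rewrite s0p leNgt phip_lt0.
split=> //; apply/eqP; rewrite -eqSS -!rank_hmx //; last by apply: contraTneq s0S => ->.
rewrite eqn_leq; apply/andP; split.
  have s0_out : ~~ (homog s0 <= hmx (zero_set S phi))%MS.
    by apply: contra phis0 => /(heval_eq0 (zero_set_hmx_mul S phi)) ->.
  apply: leq_trans (rank_ltmx _)
    (mxrankS (_ : hmx (zero_set S phi) + homog s0 <= hmx S)%MS).
    by rewrite ltmxE addsmxSl addsmx_sub submx_refl.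
  by rewrite addsmx_sub hmx_subset ?homog_sub_hmx // => x /[!mem_filter] /andP[].
apply: leq_trans (mxrankS (_ : hmx S <= zspan S p phi)%MS) _.
  by apply/row_subP => i; rewrite row_hmx spans ?mem_nth.
exact: leq_trans (mxrank_adds_leqif _ _).1 (leq_add (rank_leq_row _) (leqnn _)).
Qed.

Lemma conv_of_homog_cone S p (mu : 'I_(size S) -> R) : (forall i, 0 <= mu i) ->
  homog p = \sum_i mu i *: homog S`_i -> conv S p.
Proof.
move=> mu_ge0 Ep; exists mu; split=> //.
have Ep_at k : homog p 0 k = \sum_i mu i * homog S`_i 0 k.
  by rewrite Ep summxE; apply: eq_bigr => i _; rewrite mxE.
split.
  by rewrite -(homog0 p) Ep_at; apply: eq_bigr => i _; rewrite homog0 mulr1.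
apply/rowP => j; rewrite summxE; have := Ep_at (rshift 1 j).
by rewrite /homog !row_mxEr => ->; apply: eq_bigr => i _; rewrite row_mxEr mxE.
Qed.


End Facets.

Theorem mainTheorem16 (R : rcfType) (n k : nat) (S : seq 'rV[R]_n) :
  (1 <= k)%N -> vertex_set S -> mlevel k.+1 S ->
  forall p : 'rV[R]_n, TH k S p <-> conv S p.
Proof.
move=> _ _ levels p; split=> [THp|]; last exact: TH_of_conv.
have [[mu mu_ge0 Ep]|[y y_ge0 yp_lt0]] :=
  farkas (fun i : 'I_(size S) => homog S`_i) (homog p).
  exact: conv_of_homog_cone mu_ge0 Ep.
have [|phi [phi_ge0 phip_lt0] spans] := @exists_spanning_separator _ _ S p y.
  split=> // s sS; rewrite -(nth_index 0 sS).
  by apply: (y_ge0 (Ordinal _)); rewrite index_mem.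
suff /THp : ksos_mod k S (lin (hcoef phi) (hconst phi)).
  by rewrite -heval_lin leNgt phip_lt0.
have [vanish|/allPn[s0 s0S phis0]] := boolP (all (fun s => heval phi s == 0) S).
  by apply: ksos_mod_vanishing => s /(allP vanish)/eqP; rewrite heval_lin.
apply: ksos_mod_few_values; first exact: polyk_lin.
  by move=> s /phi_ge0; rewrite heval_lin.
apply/levels/(defines_facet_of_spanning (conj phi_ge0 phip_lt0) spans s0S phis0).
Qed.
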